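(* Let $n\ge 3$ and $k\in\{1,\dots,n-1\}$, and let $\Phi^{(n,k)}:M_n\to M_n$ be the linear map $$\Phi^{(n,k)}([a_{ij}])=\operatorname{diag}(b_1,\dots,b_n)-[a_{ij}],\qquad b_i=(n-1)a_{ii}+a_{\sigma_k(i),\sigma_k(i)},$$ where $\sigma_k(i)\equiv i+k \pmod n$ with $\sigma_k(i)\in\{1,\dots,n\}$. If $\gcd(n,k)\neq 1$, then $\Phi^{(n,k)}$ is not an extremal positive linear map.
   Context: $M_n$ denotes the algebra of complex $n\times n$ matrices. A linear map $\phi:M_n\to M_n$ is positive if it maps positive semidefinite matrices to positive semidefinite matrices; $\Phi^{(n,k)}$ is known to be positive. A positive linear map $\phi$ is extremal if whenever $\phi=\phi_1+\phi_2$ with $\phi_1,\phi_2$ positive linear maps, there are nonnegative reals $\lambda_i$ with $\phi_i=\lambda_i\phi$. *)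

From HB Require Import structures.
From mathcomp Require Import all_boot all_order all_algebra.
From mathcomp Require Import complex.
From mathcomp Require Import reals.
Set Implicit Arguments. Unset Strict Implicit. Unset Printing Implicit Defensive.
Import Order.TTheory GRing.Theory Num.Theory.
Local Open Scope ring_scope.
Local Open Scope complex_scope.

Definition adjmx (R : realType) m n (A : 'M[R[i]]_(m, n)) : 'M[R[i]]_(n, m) :=
  (map_mx (@Num.conj _) A)^T.

Definition psd (R : realType) n (A : 'M[R[i]]_n) : Prop :=
  adjmx A = A /\ forall v : 'cV[R[i]]_n, 0 <= (adjmx v *m A *m v) ord0 ord0.

Definition linmap (R : realType) n (f : 'M[R[i]]_n -> 'M[R[i]]_n) : Prop :=
  forall (a : R[i]) (x y : 'M[R[i]]_n), f (a *: x + y) = a *: f x + f y.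

Definition positive_map (R : realType) n (f : 'M[R[i]]_n -> 'M[R[i]]_n) : Prop :=
  forall A, psd A -> psd (f A).

Definition extremal (R : realType) n (f : 'M[R[i]]_n -> 'M[R[i]]_n) : Prop :=
  linmap f /\ positive_map f /\
  forall f1 f2 : 'M[R[i]]_n -> 'M[R[i]]_n,
    linmap f1 -> linmap f2 -> positive_map f1 -> positive_map f2 ->
    (forall A, f A = f1 A + f2 A) ->
    exists l1 l2 : R, 0 <= l1 /\ 0 <= l2 /\
      (forall A, f1 A = l1%:C *: f A) /\ (forall A, f2 A = l2%:C *: f A).

(* sigma_k(i) = i + k mod n  (0-based indices) *)
Definition sigma n (k : nat) (i : 'I_n) : 'I_n :=
  Ordinal (ltn_pmod (i + k) (leq_ltn_trans (leq0n i) (ltn_ord i))).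

Definition Phi (R : realType) n (k : nat) (A : 'M[R[i]]_n) : 'M[R[i]]_n :=
  diag_mx (\row_i ((n - 1)%:R * A i i + A (sigma k i) (sigma k i))) - A.

From mathcomp Require Import all_boot all_order all_algebra.
From mathcomp Require Import complex reals zify ring.
Set Implicit Arguments. Unset Strict Implicit. Unset Printing Implicit Defensive.
Import Order.TTheory GRing.Theory Num.Theory.

(* Let d = gcd(n, k) > 1 and split Phi = schur_res + (Phi - schur_res), where
   schur_res is the Schur multiplier by W_ij = d [i = j mod d] - 1.  It is
   positive because W = (1/d) sum_r u_r u_r^* with u_r = d 1_{i = r mod d} - 1.
   The remainder A |-> diag(b) - d [i = j mod d] A_ij is the average over the
   residues r of S_r^T Phi(S_r A S_r^T) S_r, where S_r A S_r^T copies into every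
   block of d consecutive indices the entries of A at the positions of residue
   r; since d | k, sigma_k preserves residues mod d, so this average is positive
   as soon as Phi is.  But schur_res is not a multiple of Phi: on an entry
   (i, j), i <> j, with i = j mod d, it multiplies by d - 1 > 0 and Phi by -1. *)

Local Open Scope ring_scope.

Section PositiveSemidefinite.
Variable R : realType.
Local Notation C := R[i].

Lemma adjmx_mul m p q (A : 'M[C]_(m, p)) (B : 'M[C]_(p, q)) :
  adjmx (A *m B) = adjmx B *m adjmx A.
Proof. by rewrite /adjmx map_mxM trmx_mul. Qed.

Lemma adjmxK m p (A : 'M[C]_(m, p)) : adjmx (adjmx A) = A.
Proof. by apply/matrixP => i j; rewrite !mxE conjCK. Qed.

Lemma adjmxD m p (A B : 'M[C]_(m, p)) : adjmx (A + B) = adjmx A + adjmx B.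
Proof. by rewrite /adjmx map_mxD linearD. Qed.

Lemma psd_congr n (M A : 'M[C]_n) : psd A -> psd (M *m A *m adjmx M).
Proof.
move=> [hA pA]; split; first by rewrite !adjmx_mul adjmxK hA mulmxA.
by move=> v; have := pA (adjmx M *m v); rewrite adjmx_mul adjmxK !mulmxA.
Qed.

Lemma psd0 n : psd (0 : 'M[C]_n).
Proof.
split; first by apply/matrixP => i j; rewrite !mxE rmorph0.
by move=> v; rewrite mulmx0 mul0mx mxE.
Qed.

Lemma psdD n (A B : 'M[C]_n) : psd A -> psd B -> psd (A + B).
Proof.
move=> [hA pA] [hB pB]; split; first by rewrite adjmxD hA hB.
by move=> v; rewrite mulmxDr mulmxDl mxE addr_ge0.
Qed.

Lemma psd_sum n I (r : seq I) (P : pred I) (F : I -> 'M[C]_n) :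
  (forall i, P i -> psd (F i)) -> psd (\sum_(i <- r | P i) F i).
Proof. by move=> psdF; apply: big_ind => //; [exact: psd0 | exact: psdD]. Qed.

Lemma psdZ n (c : C) (A : 'M[C]_n) : 0 <= c -> psd A -> psd (c *: A).
Proof.
move=> c_ge0 [hA pA]; split.
  rewrite /adjmx map_mxZ linearZ /= -/(adjmx A) hA.
  by rewrite (conj_Creal (ger0_real c_ge0)).
by move=> v; rewrite -scalemxAr -scalemxAl mxE mulr_ge0.
Qed.

Lemma linmapB n (f g : 'M[C]_n -> 'M[C]_n) :
  linmap f -> linmap g -> linmap (fun A => f A - g A).
Proof. by move=> lf lg a A B; rewrite lf lg scalerBr opprD addrACA. Qed.

End PositiveSemidefinite.

Lemma modnMDr_small d a t m : (0 < m)%N -> (t < d)%N ->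
  ((d * a + t) %% (d * m) = d * (a %% m) + t)%N.
Proof.
move=> m_gt0 t_lt_d.
have -> : (d * a + t = a %/ m * (d * m) + (d * (a %% m) + t))%N.
  by rewrite {1}(divn_eq a m); ring.
rewrite modnMDl modn_small //.
by have := ltn_pmod a m_gt0; nia.
Qed.

Section Blocks.
Variables n d : nat.
Hypotheses (d_gt0 : (0 < d)%N) (dvd_dn : (d %| n)%N).

Definition residue (i : 'I_n) : 'I_d := Ordinal (ltn_pmod i d_gt0).

Lemma block_rep_subproof (r : 'I_d) (i : 'I_n) : (d * (i %/ d) + r < n)%N.
Proof.
have : (i %/ d < n %/ d)%N by rewrite ltn_divLR // divnK.
by have := divnK dvd_dn; have := ltn_ord r; nia.
Qed.

Definition block_rep r i : 'I_n := Ordinal (block_rep_subproof r i).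

Lemma block_repP r (i j : 'I_n) :
  (block_rep r i == j) = (i %/ d == j %/ d)%N && (residue j == r).
Proof.
rewrite -!val_eqE /=; apply/eqP/andP => [<-|[/eqP-> /eqP<-]].
  rewrite mulnC divnMDl // (divn_small (ltn_ord r)) addn0.
  by rewrite modnMDl modn_small.
by rewrite mulnC -divn_eq.
Qed.

Lemma sigma_block_rep k r i :
  (d %| k)%N -> sigma k (block_rep r i) = block_rep r (sigma k i).
Proof.
move=> dvd_dk; apply: val_inj => /=; have r_lt_d := ltn_ord r.
have [m def_n] : exists m, n = (d * m)%N by exists (n %/ d)%N; rewrite mulnC divnK.
have [c def_k] : exists c, k = (d * c)%N by exists (k %/ d)%N; rewrite mulnC divnK.
have m_gt0 : (0 < m)%N by have := ltn_ord i; rewrite {2}def_n; nia.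
move: (nat_of_ord i) => {}i; rewrite def_n def_k.
have -> : (d * (i %/ d) + r + d * c = d * (i %/ d + c) + r)%N by ring.
have -> : (i + d * c = d * (i %/ d + c) + i %% d)%N by rewrite {1}(divn_eq i d); ring.
rewrite !modnMDr_small ?ltn_pmod // [(d * (_ %% _))%N]mulnC.
by rewrite divnMDl // (divn_small (ltn_pmod i d_gt0)) addn0 mulnC.
Qed.

Lemma card_block_rep_fiber r i :
  #|[pred m | block_rep r m == i]| = ((residue i == r) * d)%N.
Proof.
case: eqP => [res_i|res_i]; last first.
  by apply: eq_card0 => m; rewrite !inE block_repP (introF eqP res_i) andbF.
rewrite mul1n -[RHS]card_ord -(@card_codom _ _ (block_rep ^~ i)); last first.
  by move=> s t /(congr1 val)/addnI; apply: val_inj.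
apply: eq_card => m; rewrite !inE block_repP res_i eqxx andbT.
apply/idP/codomP => [q_eq|[s ->]].
  by exists (residue m); apply/esym/eqP; rewrite block_repP eq_sym q_eq eqxx.
by have /eqP := erefl (block_rep s i); rewrite block_repP eq_sym => /andP[].
Qed.

End Blocks.

Section FunctionMatrices.
Variable F : comNzRingType.
Variables m n : nat.
Variable f : 'I_m -> 'I_n.
Local Notation S := (rowsub f (1%:M : 'M[F]_n)).

Lemma rowsub1_congr (A : 'M[F]_n) : S *m A *m S^T = mxsub f f A.
Proof.
rewrite -rowsubE trmx_mxsub trmx1 mulmx_colsub mulmx1.
by apply/matrixP => i j; rewrite !mxE.
Qed.

Lemma rowsub1_tr_congr_diag (w : 'I_n -> F) :
  S^T *m diag_mx (\row_p w (f p)) *m S =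
  diag_mx (\row_i (#|[pred p | f p == i]|%:R * w i)).
Proof.
apply/matrixP => i j; rewrite mul_mx_diag !mxE.
under eq_bigr do rewrite !mxE.
case: eqP => [<-|neq_ij]; last first.
  rewrite mulr0n big1 // => p _.
  by case: (f p =P i) => [->|_]; rewrite ?(introF eqP neq_ij) ?mulr0 ?mul0r.
rewrite mulr1n -sum1_card natr_sum mulr_suml [RHS]big_mkcond /=.
by apply: eq_bigr => p _; rewrite inE; case: eqP => [->|_]; rewrite ?mulr1 ?mul1r ?mul0r.
Qed.

Lemma rowsub1_tr_mul : S^T *m S = diag_mx (\row_i #|[pred p | f p == i]|%:R).
Proof.
have := rowsub1_tr_congr_diag (fun=> 1).
have -> : \row_(p < m) (1 : F) = const_mx 1 by apply/rowP => p; rewrite !mxE.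
rewrite diag_const_mx mulmx1 => ->.
by congr diag_mx; apply/rowP => i; rewrite !mxE mulr1.
Qed.

End FunctionMatrices.

Lemma sum_eq_natr (F : nzRingType) d (a : 'I_d) : \sum_r ((a == r)%:R : F) = 1.
Proof.
by rewrite (bigD1 a) //= eqxx big1 ?addr0 // => r; rewrite eq_sym => /negPf ->.
Qed.

Lemma sum_eq_natr_mul (F : nzRingType) d (a b : 'I_d) :
  \sum_r ((a == r)%:R * (b == r)%:R : F) = (a == b)%:R.
Proof.
rewrite (bigD1 a) //= eqxx mul1r big1 ?addr0 ?(eq_sym b) // => r.
by rewrite eq_sym => /negPf ->; rewrite mul0r.
Qed.

Section Decomposition.
Variable R : realType.
Local Notation C := R[i].
Variables n k d : nat.
Hypotheses (d_gt0 : (0 < d)%N) (dvd_dn : (d %| n)%N) (dvd_dk : (d %| k)%N).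
Local Notation residue := (residue d_gt0).
Local Notation rep := (block_rep d_gt0 dvd_dn).
Local Notation S r := (rowsub (rep r) (1%:M : 'M[C]_n)).

Definition Phi_diag (A : 'M[C]_n) i := (n - 1)%:R * A i i + A (sigma k i) (sigma k i).

Lemma PhiE A : Phi k A = diag_mx (\row_i Phi_diag A i) - A.
Proof. by []. Qed.

Definition block_weight r (i : 'I_n) : C := (residue i == r)%:R * d%:R.

Lemma adjmx_rowsub1 m (f : 'I_m -> 'I_n) :
  adjmx (rowsub f (1%:M : 'M[C]_n)) = (rowsub f 1%:M)^T.
Proof. by rewrite /adjmx map_mxsub map_mx1. Qed.

Lemma adjmx_tr_rowsub1 m (f : 'I_m -> 'I_n) :
  adjmx (rowsub f (1%:M : 'M[C]_n))^T = rowsub f 1%:M.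
Proof. by rewrite /adjmx map_trmx trmxK map_mxsub map_mx1. Qed.

Lemma blowup_Phi r A :
  (S r)^T *m Phi k (S r *m A *m (S r)^T) *m S r =
  diag_mx (\row_i (block_weight r i * Phi_diag A i)) -
  diag_mx (\row_i block_weight r i) *m A *m diag_mx (\row_i block_weight r i).
Proof.
have fiberE i : #|[pred m | rep r m == i]|%:R = block_weight r i.
  by rewrite card_block_rep_fiber natrM.
rewrite PhiE mulmxBr mulmxBl; congr (_ - _).
  have -> : \row_i Phi_diag (S r *m A *m (S r)^T) i = \row_i Phi_diag A (rep r i).
    by apply/rowP => i; rewrite !mxE /Phi_diag rowsub1_congr !mxE sigma_block_rep.
  by rewrite rowsub1_tr_congr_diag; congr diag_mx; apply/rowP => i; rewrite !mxE fiberE.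
have -> : (S r)^T *m (S r *m A *m (S r)^T) *m S r =
    ((S r)^T *m S r) *m A *m ((S r)^T *m S r) by rewrite !mulmxA.
rewrite rowsub1_tr_mul.
by congr (diag_mx _ *m _ *m diag_mx _); apply/rowP => i; rewrite !mxE fiberE.
Qed.

Lemma sum_block_weight i : \sum_r block_weight r i = d%:R.
Proof. by rewrite -mulr_suml sum_eq_natr mul1r. Qed.

Lemma sum_block_weight_mul i j :
  \sum_r block_weight r i * block_weight r j = d%:R * d%:R * (residue i == residue j)%:R.
Proof.
rewrite -sum_eq_natr_mul mulr_sumr; apply: eq_bigr => r _.
by rewrite /block_weight; ring.
Qed.

Definition schur_res (A : 'M[C]_n) : 'M[C]_n :=
  \matrix_(i, j) ((d%:R * (residue i == residue j)%:R - 1) * A i j).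

Lemma Phi_sub_schur_res A :
  Phi k A - schur_res A =
  d%:R^-1 *: \sum_(r < d) ((S r)^T *m Phi k (S r *m A *m (S r)^T) *m S r).
Proof.
apply/matrixP => i j; rewrite [RHS]mxE summxE.
under eq_bigr do rewrite blowup_Phi mul_mx_diag mul_diag_mx !mxE.
rewrite sumrB sumrMnl -mulr_suml sum_block_weight.
under eq_bigr do rewrite mulrAC.
rewrite -mulr_suml sum_block_weight_mul !mxE.
have d_neq0 : d%:R != 0 :> C by rewrite pnatr_eq0 -lt0n.
by case: (i == j); rewrite /= /Phi_diag ?mulr1n ?mulr0n; field.
Qed.

Definition weight_mx r : 'M[C]_n := diag_mx (\row_i (block_weight r i - 1)).

Lemma adjmx_weight_mx r : adjmx (weight_mx r) = weight_mx r.
Proof.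
apply/matrixP => i j; rewrite !mxE rmorphMn eq_sym; case: eqP => [->|_]//.
by rewrite rmorphB rmorph1 rmorphM !rmorph_nat.
Qed.

Lemma schur_res_avg A :
  schur_res A = d%:R^-1 *: \sum_(r < d) (weight_mx r *m A *m adjmx (weight_mx r)).
Proof.
apply/matrixP => i j; rewrite [RHS]mxE summxE.
under eq_bigr do rewrite adjmx_weight_mx mul_mx_diag mul_diag_mx !mxE mulrAC.
rewrite -mulr_suml.
have -> : \sum_r (block_weight r i - 1) * (block_weight r j - 1) =
    \sum_r block_weight r i * block_weight r j - \sum_r block_weight r i
    - \sum_r block_weight r j + \sum_(r < d) 1.
  rewrite -!sumrB -big_split /=.
  by apply: eq_bigr => r _; ring.
rewrite sum_block_weight_mul !sum_block_weight sumr_const card_ord !mxE.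
have d_neq0 : d%:R != 0 :> C by rewrite pnatr_eq0 -lt0n.
by field.
Qed.

Lemma linmap_schur_res : linmap schur_res.
Proof. by move=> a A B; apply/matrixP => i j; rewrite !mxE; ring. Qed.

Lemma psd_schur_res A : psd A -> psd (schur_res A).
Proof.
move=> psdA; rewrite schur_res_avg; apply: psdZ; first by rewrite invr_ge0 ler0n.
by apply: psd_sum => r _; apply: psd_congr.
Qed.

Lemma psd_Phi_sub_schur_res A :
  positive_map (Phi k : 'M[C]_n -> 'M[C]_n) -> psd A -> psd (Phi k A - schur_res A).
Proof.
move=> Phi_pos psdA; rewrite Phi_sub_schur_res.
apply: psdZ; first by rewrite invr_ge0 ler0n.
apply: psd_sum => r _; have := psd_congr (S r) psdA.
by rewrite adjmx_rowsub1 => /Phi_pos /(psd_congr (S r)^T); rewrite adjmx_tr_rowsub1.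
Qed.

Lemma Phi_not_extremal :
  (1 < d)%N -> (0 < k < n)%N -> ~ extremal (Phi k : 'M[C]_n -> 'M[C]_n).
Proof.
move=> d_gt1 /andP[k_gt0 k_lt_n] [Phi_lin [Phi_pos Phi_ext]].
have [_ [l [_ [l_ge0 [_ schurE]]]]] := Phi_ext _ schur_res
  (linmapB Phi_lin linmap_schur_res) linmap_schur_res
  (fun A => psd_Phi_sub_schur_res Phi_pos) psd_schur_res (fun A => esym (subrK _ _)).
pose i0 : 'I_n := Ordinal (ltn_trans k_gt0 k_lt_n).
pose j0 : 'I_n := Ordinal k_lt_n.
have res_ij : residue i0 = residue j0 by apply: val_inj; rewrite /= mod0n; apply/esym/eqP.
have neq_ij : i0 != j0 by rewrite -val_eqE /= eq_sym -lt0n.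
have /matrixP/(_ i0 j0) := schurE (delta_mx i0 j0).
rewrite PhiE !mxE res_ij !eqxx (negbTE neq_ij) /= mulr1 mulr1 mulr0n sub0r mulrN1.
move=> /eqP; rewrite -subr_eq0 opprK; apply/negP; rewrite gt_eqF // ltr_wpDr //.
  by rewrite ler0c.
by rewrite subr_gt0 ltr1n.
Qed.

End Decomposition.

Theorem theorem2 (R : realType) (n k : nat) :
  (3 <= n)%N -> (1 <= k <= n - 1)%N -> gcdn n k != 1%N ->
  ~ extremal (@Phi R n k).
Proof.
move=> n_ge3 k_range gcd_neq1.
have n_gt0 : (0 < n)%N by apply: leq_trans n_ge3.
have gcd_gt0 : (0 < gcdn n k)%N by rewrite gcdn_gt0 n_gt0.
apply: (Phi_not_extremal gcd_gt0 (dvdn_gcdl n k) (dvdn_gcdr n k)).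
  by rewrite ltn_neqAle eq_sym gcd_neq1.
by rewrite /=; lia.
Qed.
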